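(* A Tychonoff space $X$ is pseudocompact if and only if the topological group $C_p(X,\mathbb{R})$ is TAP.
   Context: $C_p(X,\mathbb{R})$ is the additive group of all continuous real-valued functions on $X$ with the topology of pointwise convergence. A subset $A$ of a topological group $G$ is absolutely productive in $G$ if for every injection $a:\mathbb{N}\to A$ and every map $z:\mathbb{N}\to\mathbb{Z}$ the sequence $\left(\prod_{n=0}^{k}a(n)^{z(n)}\right)_{k\in\mathbb{N}}$ (sums, in additive notation) converges in $G$; $G$ is TAP if every absolutely productive subset of $G$ is finite. *)

From HB Require Import structures.
From mathcomp Require Import all_boot all_order all_algebra.
From mathcomp Require Import all_classical all_reals all_analysis.
Set Implicit Arguments. Unset Strict Implicit. Unset Printing Implicit Defensive.
Import Order.TTheory GRing.Theory Num.Theory numFieldNormedType.Exports.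
Local Open Scope classical_set_scope.
Local Open Scope ring_scope.

Definition tychonoff_space (X : topologicalType) : Prop :=
  hausdorff_space X /\ completely_regular_space X.

Definition pseudocompact (R : realType) (X : topologicalType) : Prop :=
  forall f : X -> R, continuous f -> exists M : R, forall x, `|f x| <= M.

Definition Cp (R : realType) (X : topologicalType) : set (X -> R) :=
  [set f | continuous f].

(* A subset A of C_p(X,R) is absolutely productive: for every injection
   a : nat -> A and every z : nat -> int, the partial sums
   sum_{n=0}^k z(n) a(n) converge in C_p(X,R), i.e. converge in the
   pointwise (product) topology {ptws X -> R} to a continuous function. *)
Definition abs_productive (R : realType) (X : topologicalType)
    (A : set (X -> R)) : Prop :=
  forall (a : nat -> (X -> R)) (z : nat -> int),
    injective a -> (forall n, A (a n)) ->
    exists g : X -> R, @Cp R X g /\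
      ((fun k : nat => ((fun x : X => \sum_(n < k.+1) (z n)%:~R * a n x)
                         : {ptws X -> R})) @ \oo --> (g : {ptws X -> R})).

Definition Cp_TAP (R : realType) (X : topologicalType) : Prop :=
  forall A : set (X -> R), A `<=` @Cp R X -> abs_productive A -> finite_set A.

From HB Require Import structures.
From mathcomp Require Import all_boot all_order all_algebra.
From mathcomp Require Import all_classical all_reals all_analysis.
From mathcomp Require Import lra.
Import Order.TTheory GRing.Theory Num.Theory numFieldNormedType.Exports.
Local Open Scope classical_set_scope.
Local Open Scope ring_scope.

(* A continuous f : X -> R that is unbounded yields points p_n with
   |f(p_n)| + 1 < |f(p_{n+1})|, and tent functions of height 1/2 centred at
   the levels |f(p_n)|; they are pairwise distinct and, by continuity of f,
   locally only finitely many of them are nonzero.  Every integer series of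
   them is therefore locally a finite sum, so it converges pointwise to a
   continuous function: their range is infinite and absolutely productive.
   Conversely, let A be infinite and absolutely productive.  Choosing
   z(n) > 1 / |a_n(x)| shows that a_n(x) is eventually 0 at every x, which
   gives a triangular subsequence (a_k(y_k) <> 0 and a_j(y_k) = 0 for j > k).
   Integer coefficients chosen recursively make the limit g satisfy
   |g(y_k)| >= k, so the continuous g is unbounded.  Neither direction uses
   the Tychonoff hypothesis. *)

Lemma injective_nat_eventually_ge (s : nat -> nat) : injective s ->
  forall N, exists K, forall n, (K <= n)%N -> (N <= s n)%N.
Proof.
move=> sinj; elim=> [|N [K HK]]; first by exists 0%N.
have [[n0 sn0N]|noN] := EM (exists n0, s n0 = N); last first.
  exists K => n Kn; rewrite ltn_neqAle HK // andbT.
  by apply/eqP => sn; apply: noN; exists n.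
exists (maxn K n0.+1) => n; rewrite geq_max => /andP[Kn n0n].
rewrite ltn_neqAle HK // andbT; apply/eqP => sn.
by move: n0n; rewrite (sinj n n0) ?ltnn // sn0N.
Qed.

Section course_of_values.
Context {T : Type} (x0 : T) (step : nat -> (nat -> T) -> T).
Hypothesis step_local : forall k c c',
  (forall j, (j < k)%N -> c j = c' j) -> step k c = step k c'.

Fixpoint cov_prefix (k : nat) : nat -> T :=
  if k is k'.+1 then fun j => if j == k' then step k' (cov_prefix k')
                              else cov_prefix k' j
  else fun=> x0.

Lemma cov_prefixE k j : (j < k)%N -> cov_prefix k j = step j (cov_prefix j).
Proof.
elim: k => [//|k IH]; rewrite ltnS leq_eqVlt => /orP[/eqP ->|jk] /=.
  by rewrite eqxx.
by rewrite (ltn_eqF jk) IH.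
Qed.

Lemma course_of_values_rec : exists c : nat -> T, forall k, c k = step k c.
Proof.
exists (fun j => cov_prefix j.+1 j) => k.
rewrite cov_prefixE //; apply: step_local => j jk.
by rewrite !cov_prefixE.
Qed.

End course_of_values.

Section real_sequences.
Context {R : realType}.
Implicit Types u : nat -> R.

Lemma sum_ord_stable u K : (forall n, (K < n)%N -> u n = 0) ->
  forall k, (K <= k)%N -> \sum_(n < k.+1) u n = \sum_(n < K.+1) u n.
Proof.
move=> u0; elim=> [|k IH]; first by rewrite leqn0 => /eqP ->.
rewrite leq_eqVlt => /orP[/eqP -> //|Kk].
by rewrite big_ord_recr /= u0 // addr0 IH.
Qed.

Lemma partial_sums_lim_finite u K (l : R) : (forall n, (K < n)%N -> u n = 0) ->
  (fun k => \sum_(n < k.+1) u n) @ \oo --> l -> l = \sum_(n < K.+1) u n.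
Proof.
move=> u0 ul.
have uK : (fun k => \sum_(n < k.+1) u n) @ \oo --> \sum_(n < K.+1) u n.
  by apply: cvg_near_cst; exists K => // k /= Kk; exact: sum_ord_stable.
exact: cvg_unique ul uK.
Qed.

Lemma partial_sums_cvg_terms0 u (l : R) :
  (fun k => \sum_(n < k.+1) u n) @ \oo --> l -> u @ \oo --> 0.
Proof.
move=> ul; apply: cvg_series_cvg_0; apply/cvg_ex; exists l.
rewrite -cvg_shiftS.
suff -> : [sequence series u n.+1]_n = (fun k => \sum_(n < k.+1) u n) by [].
by apply/funext => k; rewrite /series /= big_mkord.
Qed.

Lemma gap_seq_dist u : (forall n, u n + 1 < u n.+1) ->
  forall m n, m <> n -> 1 < `|u m - u n|.
Proof.
move=> gap.
have lt_gap m n : (m < n)%N -> u m + 1 < u n.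
  elim: n => // n IH; rewrite ltnS leq_eqVlt => /orP[/eqP -> //|/IH].
  by have := gap n; lra.
have dist m n : (m < n)%N -> 1 < `|u m - u n|.
  by move=> /lt_gap mn; rewrite distrC ger0_norm; lra.
move=> m n /eqP; rewrite neq_ltn => /orP[/dist //|/dist].
by rewrite distrC.
Qed.

Lemma gap_seq_ge_nat u : 0 <= u 0 -> (forall n, u n + 1 < u n.+1) ->
  forall n, n%:R <= u n.
Proof.
move=> u0 gap; elim=> [//|n IH].
by rewrite mulrSr; have := gap n; lra.
Qed.

Lemma unbounded_gap_seq {T : Type} {phi : T -> R} :
  (forall M, exists x, M < phi x) ->
  exists p : nat -> T, forall n, phi (p n) + 1 < phi (p n.+1).
Proof.
move=> /choice[xf xfP].
by exists (fun n => iter n (fun x => xf (phi x + 1)) (xf 0)) => n; exact: xfP.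
Qed.

End real_sequences.

Lemma ptws_cvgn_at {X : topologicalType} {V : uniformType} {S : nat -> X -> V}
    {g : X -> V} (x : X) :
  (fun k => (S k : {ptws X -> V})) @ \oo --> (g : {ptws X -> V}) ->
  (fun k => S k x) @ \oo --> g x.
Proof. by move=> /pointwise_cvgP; apply. Qed.

Lemma triangular_subsequence {T : Type} {V : zmodType} {b : nat -> T -> V} :
  (forall n, exists x, b n x != 0) ->
  (forall x, \forall n \near \oo, b n x = 0) ->
  exists (s : nat -> nat) (y : nat -> T), [/\ injective s,
    forall k, b (s k) (y k) != 0 &
    forall k j, (k < j)%N -> b (s j) (y k) = 0].
Proof.
move=> /choice[x bx] b_ev0.
have /choice[N bN] : forall t, exists N, forall n, (N <= n)%N -> b n t = 0.
  by move=> t; have [N _ bN] := b_ev0 t; exists N.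
pose next i := maxn i.+1 (N (x i)).
pose s k := iter k next 0.
have s_incr k : (s k < s k.+1)%N by rewrite /= leq_maxl.
have s_mono : {homo s : i j / (i < j)%N}.
  by apply: homo_ltn s_incr => ? ? ? /ltn_trans; apply.
exists s, (fun k => x (s k)); split => // [i j sij|k j kj].
  by apply: incn_inj (leq_mono s_mono) _ _ sij.
have le_sj : (s k.+1 <= s j)%N by rewrite (leq_mono s_mono).
by apply: bN; apply: leq_trans le_sj; exact: leq_maxr.
Qed.

Lemma diagonal_coefficients_unbounded {R : realType} {T : Type}
    {b : nat -> T -> R} {y : nat -> T} :
  (forall k, b k (y k) != 0) ->
  exists c : nat -> int,
    forall k, k%:R <= `|\sum_(j < k.+1) (c j)%:~R * b j (y k)|.
Proof.
move=> bkk.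
pose step k (c : nat -> int) : int := Posz (Num.truncn
  ((k%:R + `|\sum_(j < k) (c j)%:~R * b j (y k)|) / `|b k (y k)|)).+1.
have [|c cE] := @course_of_values_rec _ 0 step.
  move=> k c c' cc'; congr (Posz (Num.truncn ((_ + `|_|) / _)).+1).
  by apply: eq_bigr => j _; rewrite cc'.
exists c => k; rewrite big_ord_recr /= [c k]cE /step.
set s := \sum_(j < k) _; set t := Num.truncn _.
have -> : (Posz t.+1)%:~R = t.+1%:R :> R by [].
have bkk_gt0 : 0 < `|b k (y k)| by rewrite normr_gt0.
have : k%:R + `|s| < t.+1%:R * `|b k (y k)|.
  by rewrite -ltr_pdivrMr //; exact: truncnS_gt.
have := lerB_dist (t.+1%:R * b k (y k)) (- s).
rewrite normrN opprK normrM normr_nat addrC; lra.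
Qed.

Section locally_finite_series.
Context {R : realType} {X : topologicalType}.
Implicit Types F : nat -> X -> R.

Definition locally_eventually_zero F :=
  forall y : X, exists K,
    \forall y' \near y, forall n, (K <= n)%N -> F n y' = 0.

Lemma locally_eventually_zero_reindex F (s : nat -> nat) (c : nat -> R) :
  injective s -> locally_eventually_zero F ->
  locally_eventually_zero (fun n y => c n * F (s n) y).
Proof.
move=> sinj F0 y; have [K FK] := F0 y.
have [K' sK'] := injective_nat_eventually_ge _ sinj K.
exists K'; apply: filterS FK => y' FKy' n K'n.
by rewrite FKy' ?mulr0 ?sK'.
Qed.

Lemma locally_eventually_zero_series F :
  (forall n, continuous (F n)) -> locally_eventually_zero F ->
  exists g, continuous g /\
    forall y, (fun k => \sum_(n < k.+1) F n y) @ \oo --> g y.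
Proof.
move=> Fc /choice[K FK].
have F0 y n : (K y <= n)%N -> F n y = 0 by apply: (nbhs_singleton (FK y)).
pose S k y := \sum_(n < k.+1) F n y.
have S_stable y k : (K y <= k)%N -> S k y = S (K y) y.
  by apply: (@sum_ord_stable R (F^~ y)) => n /ltnW; apply: F0.
exists (fun y => S (K y) y); split; last first.
  by move=> y; apply: cvg_near_cst; exists (K y) => // k /= /S_stable.
move=> y; have Sc : continuous (S (K y)).
  apply: (continuous_big (op := +%R) (x0 := 0) add_continuous) => n _.
  exact: Fc.
suff near_S : \forall y' \near y, S (K y) y' = S (K y') y'.
  exact: cvg_trans (near_eq_cvg near_S) (Sc y).
apply: filterS (FK y) => y' FKy'.
have Ky'_stable k : (K y <= k)%N -> S k y' = S (K y) y'.
  by apply: (@sum_ord_stable R (F^~ y')) => n /ltnW; apply: FKy'.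
by rewrite -(Ky'_stable (maxn (K y) (K y'))) ?leq_maxl // S_stable ?leq_maxr.
Qed.

Lemma locally_eventually_zero_abs_productive F :
  (forall n, continuous (F n)) -> locally_eventually_zero F ->
  abs_productive (range F).
Proof.
move=> Fc F0 a z ainj aF.
have /choice[s sE] : forall n, exists m, F m = a n.
  by move=> n; have [m _ <-] := aF n; exists m.
have sinj : injective s by move=> m n smn; apply: ainj; rewrite -!sE smn.
have -> : a = F \o s by apply/funext => n; rewrite /= sE.
have Gc n : continuous (fun y => (z n)%:~R * F (s n) y).
  by move=> y; apply: cvgMl_tmp; exact: Fc.
have [g [gc gG]] := locally_eventually_zero_series _ Gc
  (locally_eventually_zero_reindex _ _ (fun n => (z n)%:~R) sinj F0).
by exists g; split => //; apply/pointwise_cvgP => y; exact: gG.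
Qed.

End locally_finite_series.

Section bumps.
Context {R : realType} {X : topologicalType} (phi : X -> R).
Hypothesis phi_cont : continuous phi.

Definition bump (t : R) (y : X) : R := Num.max 0 (2^-1 - `|phi y - t|).

Lemma bump_continuous t : continuous (bump t).
Proof.
move=> y; apply: (@continuous_max R X (cst 0) (fun y => 2^-1 - `|phi y - t|)).
  exact: cst_continuous.
apply: continuousB; first exact: cst_continuous.
apply: (continuous_comp (f := fun y => phi y - t)); last exact: norm_continuous.
by apply: continuousB; [exact: phi_cont | exact: cst_continuous].
Qed.

Lemma bump_eq0 t y : 2^-1 <= `|phi y - t| -> bump t y = 0.
Proof. by move=> le_half; rewrite /bump max_l // subr_le0. Qed.

Lemma bump_center y : bump (phi y) y = 2^-1.
Proof. by rewrite /bump subrr normr0 subr0 max_r // invr_ge0. Qed.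

Lemma bump_seq_injective (p : nat -> X) :
  (forall m n, m <> n -> 1 < `|phi (p m) - phi (p n)|) ->
  injective (fun n => bump (phi (p n))).
Proof.
move=> sep m n bmn; apply: contrapT => mn.
have := congr1 (fun b => b (p n)) bmn; rewrite /= bump_center bump_eq0.
  by move=> /esym/eqP; rewrite invr_eq0 pnatr_eq0.
by rewrite distrC; apply/ltW; apply: le_lt_trans (sep _ _ mn); lra.
Qed.

Lemma bump_seq_locally_eventually_zero (u : nat -> R) :
  (forall n, n%:R <= u n) -> locally_eventually_zero (fun n => bump (u n)).
Proof.
move=> u_ge y; exists (Num.truncn (phi y + 1)).+1.
have phi_near : \forall y' \near y, `|phi y - phi y'| < 2^-1.
  have half_gt0 : (0 : R) < 2^-1 by rewrite invr_gt0.
  exact: (cvgrPdist_lt _ _).1 (phi_cont y) _ half_gt0.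
apply: filterS phi_near => y' phi_y' n Kn; apply: bump_eq0.
have phi_lt_n : phi y + 1 < n%:R.
  by apply: lt_le_trans (truncnS_gt _) _; rewrite ler_nat.
have phi_y'_le : phi y' - phi y <= `|phi y - phi y'| by rewrite distrC ler_norm.
have := u_ge n; rewrite distrC => u_n; apply: le_trans (ler_norm _); lra.
Qed.

End bumps.

Lemma Cp_TAP_pseudocompact (R : realType) (X : topologicalType) :
  Cp_TAP R X -> pseudocompact R X.
Proof.
move=> tap f fc; apply: contrapT => f_unbounded.
pose phi : X -> R := fun x => `|f x|.
have phi_cont : continuous phi.
  by move=> x; apply: continuous_comp (fc x) _; exact: norm_continuous.
have phi_unbounded M : exists x, M < phi x.
  apply: contrapT => noM; apply: f_unbounded; exists M => x.
  by rewrite leNgt; apply/negP => Mx; apply: noM; exists x.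
have [p gap] := unbounded_gap_seq phi_unbounded.
pose h n := bump phi (phi (p n)).
have h_inj : injective h by apply: bump_seq_injective; exact: gap_seq_dist.
have h_infinite : infinite_set (range h).
  apply/infiniteP.
  by have /card_eqPle[] := inj_card_eq (A := setT) (in2W h_inj).
apply: h_infinite; apply: tap.
- by move=> _ [n _ <-]; exact: bump_continuous.
- apply: locally_eventually_zero_abs_productive.
    by move=> n; exact: bump_continuous.
  apply: bump_seq_locally_eventually_zero => //.
  by apply: gap_seq_ge_nat gap; rewrite /phi.
Qed.

Lemma abs_productive_eventually_zero {R : realType} {X : topologicalType}
    {A : set (X -> R)} {b : nat -> X -> R} :
  abs_productive A -> injective b -> (forall n, A (b n)) ->
  forall x, \forall n \near \oo, b n x = 0.
Proof.
move=> Aap binj bA x.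
pose z n : int := if b n x == 0 then 0 else Posz (Num.truncn `|b n x|^-1).+1.
have [g [_ Sg]] := Aap b z binj bA.
have zb0 : (fun n => (z n)%:~R * b n x) @ \oo --> 0.
  exact: partial_sums_cvg_terms0 (ptws_cvgn_at x Sg).
apply: filterS ((cvgr0Pnorm_lt _).1 zb0 _ ltr01) => n /=.
rewrite /z; case: eqP => // /eqP bnx.
rewrite ltNge => /negP; apply: contra_notP => _.
set t := Num.truncn _; have -> : (Posz t.+1)%:~R = t.+1%:R :> R by [].
have bnx_gt0 : 0 < `|b n x| by rewrite normr_gt0.
rewrite normrM normr_nat -[X in X <= _](mulVf (lt0r_neq0 bnx_gt0)) ler_pM2r //.
exact: ltW (truncnS_gt _).
Qed.

Lemma pseudocompact_Cp_TAP (R : realType) (X : topologicalType) :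
  pseudocompact R X -> Cp_TAP R X.
Proof.
move=> pc A _ Aap; apply: contrapT => Ainf.
have [b [b_inj bA b_neq0]] : exists b : nat -> X -> R,
    [/\ injective b, forall n, A (b n) & forall n, b n != 0].
  have /infiniteP/pcard_leP/injfunPex[b bA b_inj] :=
    infinite_setD Ainf (finite_set1 (0 : X -> R)).
  exists b; split=> [m n bmn|n|n]; first by apply: b_inj; rewrite ?inE.
    by have [] := bA n I.
  by have [_ /eqP] := bA n I.
have b_somewhere n : exists x, b n x != 0.
  apply: contrapT => b0; apply/(negP (b_neq0 n))/eqP/funext => x.
  by apply/eqP; apply: contrapT => bnx; apply: b0; exists x; exact/negP.
have [s [y [s_inj bs_diag bs_upper]]] := triangular_subsequence b_somewhere
  (abs_productive_eventually_zero Aap b_inj bA).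
have [c c_big] := diagonal_coefficients_unbounded (b := b \o s) bs_diag.
have [g [g_cont Sg]] :=
  Aap (b \o s) c (inj_comp b_inj s_inj) (fun k => bA (s k)).
have g_diag k : g (y k) = \sum_(j < k.+1) (c j)%:~R * b (s j) (y k).
  apply: (@partial_sums_lim_finite _ (fun j => (c j)%:~R * b (s j) (y k)) k).
    by move=> j kj; rewrite bs_upper // mulr0.
  exact: ptws_cvgn_at (y k) Sg.
have [M gM] := pc g g_cont.
pose k := (Num.truncn M).+1.
have Mk : M < k%:R := truncnS_gt M.
by have := gM (y k); have := c_big k; rewrite -g_diag; lra.
Qed.

Theorem theorem5p3 (R : realType) (X : topologicalType) :
  tychonoff_space X -> (pseudocompact R X <-> Cp_TAP R X).
Proof.
by move=> _; split; [exact: pseudocompact_Cp_TAP | exact: Cp_TAP_pseudocompact].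
Qed.
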